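(* Let $\Phi=\exp(\phi)\in KV_3$ satisfy the pentagon equation $\Phi^{12,3,4}\Phi^{1,2,34}=\Phi^{1,2,3}\Phi^{1,23,4}\Phi^{2,3,4}$, the inversion property $\Phi^{1,2,3}\Phi^{3,2,1}=e$, and the hexagon equations $\exp((t^{1,3}+t^{2,3})/2)=\Phi^{2,1,3}\exp(t^{1,3}/2)(\Phi^{2,3,1})^{-1}\exp(t^{2,3}/2)\Phi^{3,2,1}$ and $\exp((t^{1,2}+t^{1,3})/2)=(\Phi^{1,3,2})^{-1}\exp(t^{1,3}/2)\Phi^{3,1,2}\exp(t^{1,2}/2)(\Phi^{3,2,1})^{-1}$. Then $\pi(\phi_2)=1/8$.
   Context: $k$ is a field of characteristic zero; $\mathfrak{lie}_n$, $\mathrm{Ass}_n$ are the degree completions of the free Lie and free associative algebras over $k$ on $x_1,\dots,x_n$ (written $x,y,z$; $x,y,z,w$), graded by word length. $a=a_0+\sum_k(\partial_ka)x_k$; $\mathfrak{tr}_n=\mathrm{Ass}_n^+/\langle ab-ba\rangle$ with projection $\mathrm{Tr}$. $\mathfrak{tder}_n$: derivations with $u(x_i)=[x_i,a_i]$, written $(a_1,\dots,a_n)$ ($a_i$ with zero coefficient of $x_i$ in degree one); $\mathfrak{sder}_n$: those with $u(\sum x_i)=0$; $\mathrm{div}(u)=\sum_k\mathrm{Tr}(x_k\partial_ka_k)$; $\mathfrak{kv}_n=\{u\in\mathfrak{sder}_n:\mathrm{div}\,u=0\}$; $KV_n=\exp(\mathfrak{kv}_n)$, $e$ the identity. In $\mathfrak{tder}_3$: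 $t^{1,2}=(y,x,0)$, $t^{1,3}=(z,0,x)$, $t^{2,3}=(0,z,y)$. For $u=(a_1,a_2,a_3)\in\mathfrak{tder}_3$ and a permutation $(i_1,i_2,i_3)$ of $(1,2,3)$, $u^{i_1,i_2,i_3}$ sends $x_{i_k}\mapsto[x_{i_k},a_k(x_{i_1},x_{i_2},x_{i_3})]$ ($x_1=x,x_2=y,x_3=z$). In $\mathfrak{tder}_4$: $u^{1,2,3}=(a_1,a_2,a_3,0)$, $u^{2,3,4}=(0,a_1,a_2,a_3)(y,z,w)$, $u^{12,3,4}=(a_1,a_1,a_2,a_3)(x+y,z,w)$, $u^{1,23,4}=(a_1,a_2,a_2,a_3)(x,y+z,w)$, $u^{1,2,34}=(a_1,a_2,a_3,a_3)(x,y,z+w)$. For group elements $\exp(u)^{\dots}=\exp(u^{\dots})$. For $\Phi=\exp(\phi)$ satisfying the pentagon equation, the degree-two component $\phi_2$ of $\phi$ has the form $(\alpha[y,z],\beta[z,x],\gamma[x,y])$ with $\alpha,\beta,\gamma\in k$, and $\pi(\phi_2):=\alpha+\beta+\gamma$. *)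

(* Completed free associative algebra Ass_n over a field k,
   modelled as formal noncommutative power series: functions from words
   (seq 'I_n) to k.  Variables are 0-based: x = 0, y = 1, z = 2, w = 3. *)
From HB Require Import structures.
From mathcomp Require Import all_boot all_order all_algebra.
Set Implicit Arguments.
Unset Strict Implicit.
Unset Printing Implicit Defensive.
Import GRing.Theory.
Local Open Scope ring_scope.

Section Series.
Variable k : fieldType.
Variable n : nat.

Definition word := seq 'I_n.
Definition series := word -> k.

Definition s0 : series := fun _ => 0.
Definition sadd (f g : series) : series := fun w => f w + g w.
Definition sopp (f : series) : series := fun w => - f w.
Definition sscale (c : k) (f : series) : series := fun w => c * f w.
Definition smul (f g : series) : series :=
  fun w => \sum_(j < (size w).+1) f (take j w) * g (drop j w).
Definition sbr (f g : series) : series := sadd (smul f g) (sopp (smul g f)).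
Definition sX (i : 'I_n) : series := fun w => (w == [:: i])%:R.
Definition sXn (i : nat) : series := fun w => (map val w == [:: i])%:R.
Definition hom (d : nat) (f : series) : series :=
  fun w => if size w == d then f w else 0.

(* Lie polynomials: the free Lie algebra sitting inside Ass_n *)
Inductive lterm :=
| LZero
| LX of 'I_n
| LBr of lterm & lterm
| LAdd of lterm & lterm
| LScale of k & lterm.

Fixpoint leval (t : lterm) : series :=
  match t with
  | LZero => s0
  | LX i => sX i
  | LBr t1 t2 => sbr (leval t1) (leval t2)
  | LAdd t1 t2 => sadd (leval t1) (leval t2)
  | LScale c t1 => sscale c (leval t1)
  end.

(* f belongs to the degree completion lie_n: every homogeneous component
   is a Lie polynomial *)
Definition is_lie (f : series) : Prop :=
  forall d, exists t : lterm, forall w, hom d f w = leval t w.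

(* a = a_0 + sum_k (partial_k a) x_k *)
Definition sderiv (i : 'I_n) (f : series) : series := fun w => f (rcons w i).

(* Tr f = 0 in tr_n: every homogeneous component of f is a finite sum of
   commutators ab - ba *)
Definition tr_zero (f : series) : Prop :=
  forall d, exists s : seq (series * series),
    forall w, hom d f w = \sum_(pq <- s) sbr pq.1 pq.2 w.

Definition der := 'I_n -> series.

Definition is_tder (u : der) : Prop :=
  forall i, is_lie (u i) /\ u i [:: i] = 0.

Definition is_sder (u : der) : Prop :=
  is_tder u /\ forall w, \sum_(i < n) sbr (sX i) (u i) w = 0.

(* div u = sum_k Tr(x_k partial_k a_k) = Tr(sum_k x_k partial_k a_k) *)
Definition div_zero (u : der) : Prop :=
  tr_zero (fun w => \sum_(i < n) smul (sX i) (sderiv i (u i)) w).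

Definition is_kv (u : der) : Prop := is_sder u /\ div_zero u.

(* the (continuous) derivation x_i |-> [x_i, a_i] applied to a series *)
Definition applyDer (u : der) (f : series) : series :=
  fun w => \sum_(l < (size w).+1) \sum_(j < l.+1) \sum_(i < n)
     f (take j w ++ i :: drop l w) * sbr (sX i) (u i) (drop j (take l w)).

Definition iterDer (u : der) (m : nat) (f : series) : series :=
  iter m (applyDer u) f.

(* exp(u) as an automorphism of Ass_n: sum_m u^m / m!  (terms with
   m > size w vanish at the word w) *)
Definition expDer (u : der) (f : series) : series :=
  fun w => \sum_(m < (size w).+1) (m`!%:R)^-1 * iterDer u m f w.

Definition dadd (u v : der) : der := fun i => sadd (u i) (v i).
Definition dopp (u : der) : der := fun i => sopp (u i).
Definition dscale (c : k) (u : der) : der := fun i => sscale c (u i).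

End Series.

(* linear substitution of variables x_l |-> sum_j M l j x_j *)
Definition lsubst (k : fieldType) (m n : nat) (M : 'I_m -> 'I_n -> k)
  (a : series k m) : series k n :=
  fun w => \sum_(v : (size w).-tuple 'I_m)
             a (tval v) * \prod_(p <- zip (tval v) w) M p.1 p.2.

(* u^{i1,i2,i3} (1-based indices, as in the paper) *)
Definition relabel3 (k : fieldType) (i1 i2 i3 : nat) (u : der k 3) : der k 3 :=
  let s := fun l : nat => nth 0%N [:: i1.-1; i2.-1; i3.-1] l in
  fun j w => \sum_(l < 3 | s l == val j)
             lsubst (fun (a b : 'I_3) => (s a == val b)%:R) (u l) w.

(* generic coface map tder_3 -> tder_4: variable a of u goes to
   sum_{b | f a b} x_b, and component j of the result is component c j of u
   (substituted), or 0 when c j >= 3 *)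
Definition coface (k : fieldType) (f : nat -> nat -> bool) (c : nat -> nat)
  (u : der k 3) : der k 4 :=
  fun j w => \sum_(l < 3 | c (val j) == val l)
             lsubst (fun (a : 'I_3) (b : 'I_4) => (f a b)%:R) (u l) w.

(* u^{1,2,3} = (a1,a2,a3,0) *)
Definition cof_1_2_3 (k : fieldType) (u : der k 3) : der k 4 :=
  coface (fun a b => b == a) (fun j => j) u.
(* u^{2,3,4} = (0,a1,a2,a3)(y,z,w) *)
Definition cof_2_3_4 (k : fieldType) (u : der k 3) : der k 4 :=
  coface (fun a b => b == a.+1) (fun j => if j == 0%N then 3%N else j.-1) u.
(* u^{12,3,4} = (a1,a1,a2,a3)(x+y,z,w) *)
Definition cof_12_3_4 (k : fieldType) (u : der k 3) : der k 4 :=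
  coface (fun a b => if a == 0%N then (b <= 1)%N else b == a.+1)
         (fun j => j.-1) u.
(* u^{1,23,4} = (a1,a2,a2,a3)(x,y+z,w) *)
Definition cof_1_23_4 (k : fieldType) (u : der k 3) : der k 4 :=
  coface (fun a b => if a == 0%N then b == 0%N
                     else if a == 1%N then (b == 1%N) || (b == 2%N)
                     else b == 3%N)
         (fun j => if (j <= 1)%N then j else j.-1) u.
(* u^{1,2,34} = (a1,a2,a3,a3)(x,y,z+w) *)
Definition cof_1_2_34 (k : fieldType) (u : der k 3) : der k 4 :=
  coface (fun a b => if (a < 2)%N then b == a else (2 <= b)%N)
         (fun j => minn j 2) u.

(* t^{a+1,b+1} in tder_3 (0-based a < b) *)
Definition tt (k : fieldType) (a b : nat) : der k 3 :=
  fun j => if val j == a then @sXn k 3 b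
           else if val j == b then @sXn k 3 a else @s0 k 3.
Definition t12 (k : fieldType) : der k 3 := tt k 0 1.
Definition t13 (k : fieldType) : der k 3 := tt k 0 2.
Definition t23 (k : fieldType) : der k 3 := tt k 1 2.

Definition o0 : 'I_3 := @Ordinal 3 0 isT.
Definition o1 : 'I_3 := @Ordinal 3 1 isT.
Definition o2 : 'I_3 := @Ordinal 3 2 isT.

(* pi(phi_2) = alpha + beta + gamma where phi_2 = (alpha[y,z], beta[z,x],
   gamma[x,y]): alpha = coefficient of yz in a_1, etc. *)
Definition pi2 (k : fieldType) (u : der k 3) : k :=
  u o0 [:: o1; o2] + u o1 [:: o2; o0] + u o2 [:: o0; o1].

(* Everything is read off in degrees at most three, where exp(u) is
   1 + u + u^2/2 and is the identity on words of length at most one.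
   In degree two the pentagon only sees the linear part phi_1 of phi, which
   it forces to be additive along the five coface maps; comparing the
   coefficients of suitable words gives phi_1 = 0.  Once phi_1 = 0, the
   coefficient of x y z in the inversion relation and the coefficient of
   x z y in the first hexagon are two linear relations among the quadratic
   coefficients of phi; the constant 1/8 of the hexagon relation comes from
   the second-order terms of the exponentials of t^{1,3}/2 and t^{2,3}/2.
   Adding the two relations isolates pi(phi_2). *)
From mathcomp Require Import all_boot all_order all_algebra.
From mathcomp Require Import ring.
Set Implicit Arguments.
Unset Strict Implicit.
Unset Printing Implicit Defensive.
Import GRing.Theory.
Local Open Scope ring_scope.

Section ShortWords.
Variables (k : fieldType) (n : nat).
Implicit Types (f g : series k n) (u : der k n) (a b c i : 'I_n).

Lemma sX_word1 i a : sX k i [:: a] = (a == i)%:R.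
Proof. by rewrite /sX eqseq_cons andbT. Qed.

Lemma sX_word2 i a b : sX k i [:: a; b] = 0.
Proof. by rewrite /sX eqseq_cons andbF. Qed.

Lemma sX_word3 i a b c : sX k i [:: a; b; c] = 0.
Proof. by rewrite /sX eqseq_cons andbF. Qed.

Lemma sbrX_nil i g : sbr (sX k i) g [::] = 0.
Proof. rewrite /sbr /sadd /sopp /smul !big_ord_recr !big_ord0 /=; ring. Qed.

Lemma sbrX_word1 i g a : sbr (sX k i) g [:: a] = 0.
Proof.
rewrite /sbr /sadd /sopp /smul !big_ord_recr !big_ord0 /= ?sX_word1; ring.
Qed.

Lemma sbrX_word2 i g a b :
  sbr (sX k i) g [:: a; b] = (a == i)%:R * g [:: b] - (b == i)%:R * g [:: a].
Proof.
rewrite /sbr /sadd /sopp /smul !big_ord_recr !big_ord0 /= ?sX_word1 ?sX_word2.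
ring.
Qed.

Lemma sbrX_word3 i g a b c :
  sbr (sX k i) g [:: a; b; c] =
  (a == i)%:R * g [:: b; c] - (c == i)%:R * g [:: a; b].
Proof.
rewrite /sbr /sadd /sopp /smul !big_ord_recr !big_ord0 /=.
rewrite ?sX_word1 ?sX_word2 ?sX_word3; ring.
Qed.

Lemma sum_mul_delta (F : 'I_n -> k) a : \sum_i F i * (a == i)%:R = F a.
Proof.
rewrite (bigD1 a) //= eqxx mulr1 big1 ?addr0 // => i /negbTE.
by rewrite eq_sym => ->; rewrite mulr0.
Qed.

Lemma sum_mul_sbrX_nil (F : 'I_n -> k) u :
  \sum_i F i * sbr (sX k i) (u i) [::] = 0.
Proof. by rewrite big1 // => i _; rewrite sbrX_nil mulr0. Qed.

Lemma sum_mul_sbrX_word1 (F : 'I_n -> k) u a :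
  \sum_i F i * sbr (sX k i) (u i) [:: a] = 0.
Proof. by rewrite big1 // => i _; rewrite sbrX_word1 mulr0. Qed.

Lemma sum_mul_sbrX_word2 (F : 'I_n -> k) u a b :
  \sum_i F i * sbr (sX k i) (u i) [:: a; b] =
  F a * u a [:: b] - F b * u b [:: a].
Proof.
rewrite (eq_bigr (fun i => F i * u i [:: b] * (a == i)%:R
                          - F i * u i [:: a] * (b == i)%:R)).
  by rewrite sumrB !sum_mul_delta.
by move=> i _; rewrite sbrX_word2; ring.
Qed.

Lemma sum_mul_sbrX_word3 (F : 'I_n -> k) u a b c :
  \sum_i F i * sbr (sX k i) (u i) [:: a; b; c] =
  F a * u a [:: b; c] - F c * u c [:: a; b].
Proof.
rewrite (eq_bigr (fun i => F i * u i [:: b; c] * (a == i)%:R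
                          - F i * u i [:: a; b] * (c == i)%:R)).
  by rewrite sumrB !sum_mul_delta.
by move=> i _; rewrite sbrX_word3; ring.
Qed.

Lemma applyDer_word1 u f a : applyDer u f [:: a] = 0.
Proof.
rewrite /applyDer !big_ord_recr !big_ord0 /=.
rewrite !sum_mul_sbrX_nil !sum_mul_sbrX_word1; ring.
Qed.

Lemma applyDer_word2 u f a b :
  applyDer u f [:: a; b] = f [:: a] * u a [:: b] - f [:: b] * u b [:: a].
Proof.
rewrite /applyDer !big_ord_recr !big_ord0 /=.
rewrite !sum_mul_sbrX_nil !sum_mul_sbrX_word1 !sum_mul_sbrX_word2; ring.
Qed.

Lemma applyDer_word3 u f a b c :
  applyDer u f [:: a; b; c] =
    f [:: a; c] * u a [:: b] - f [:: b; c] * u b [:: a]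
  + f [:: a; b] * u b [:: c] - f [:: a; c] * u c [:: b]
  + f [:: a] * u a [:: b; c] - f [:: c] * u c [:: a; b].
Proof.
rewrite /applyDer !big_ord_recr !big_ord0 /=.
rewrite !sum_mul_sbrX_nil !sum_mul_sbrX_word1 !sum_mul_sbrX_word2.
rewrite sum_mul_sbrX_word3; ring.
Qed.

Lemma expDer_word1 u f a : expDer u f [:: a] = f [:: a].
Proof.
rewrite /expDer /iterDer !big_ord_recr big_ord0 /= applyDer_word1 invr1; ring.
Qed.

Lemma expDer_word2 u f a b :
  expDer u f [:: a; b] = f [:: a; b] + f [:: a] * u a [:: b] - f [:: b] * u b [:: a].
Proof.
rewrite /expDer /iterDer !big_ord_recr big_ord0 /=.
rewrite !applyDer_word2 !applyDer_word1 invr1; ring.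
Qed.

Lemma expDer_word3 u f a b c :
  expDer u f [:: a; b; c] = f [:: a; b; c] + applyDer u f [:: a; b; c]
    + 2%:R^-1 * applyDer u (applyDer u f) [:: a; b; c].
Proof.
rewrite /expDer /iterDer !big_ord_recr big_ord0 /=.
rewrite [in X in _ + X = _]applyDer_word3 !applyDer_word2 !applyDer_word1 invr1.
ring.
Qed.

End ShortWords.

Lemma sum_tuple1 (R : nmodType) m (F : 1.-tuple 'I_m -> R) :
  \sum_(v : 1.-tuple 'I_m) F v = \sum_(p : 'I_m) F [tuple p].
Proof.
rewrite (reindex (fun p : 'I_m => [tuple p])) //.
exists (fun t : 1.-tuple 'I_m => thead t) => [p _ | t _] //.
by apply/val_inj; case: t => [[|x [|y s]]].
Qed.

Lemma sum_tuple2 (R : nmodType) m (F : 2.-tuple 'I_m -> R) :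
  \sum_(v : 2.-tuple 'I_m) F v = \sum_(p : 'I_m) \sum_(q : 'I_m) F [tuple p; q].
Proof.
rewrite pair_big /= (reindex (fun pq : 'I_m * 'I_m => [tuple pq.1; pq.2])) //.
exists (fun t : 2.-tuple 'I_m => (thead t, thead (behead_tuple t))).
  by case.
by move=> t _; apply/val_inj; case: t => [[|x [|y [|z s]]]].
Qed.

Lemma lsubst_word1 (k : fieldType) m n (M : 'I_m -> 'I_n -> k) a x :
  lsubst M a [:: x] = \sum_p a [:: p] * M p x.
Proof. by rewrite /lsubst sum_tuple1; apply: eq_bigr => p _; rewrite big_seq1. Qed.

Lemma lsubst_word2 (k : fieldType) m n (M : 'I_m -> 'I_n -> k) a x y :
  lsubst M a [:: x; y] = \sum_p \sum_q a [:: p; q] * (M p x * M q y).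
Proof.
rewrite /lsubst sum_tuple2; apply: eq_bigr => p _; apply: eq_bigr => q _.
by rewrite big_cons big_seq1.
Qed.

Lemma sum_ord3 (R : nmodType) (F : 'I_3 -> R) :
  \sum_(l < 3) F l = F o0 + F o1 + F o2.
Proof.
rewrite !big_ord_recr big_ord0 /= add0r.
by congr (F _ + F _ + F _); apply/val_inj.
Qed.

Lemma sum_ord3_cond (R : nmodType) (P : pred 'I_3) (F : 'I_3 -> R) :
  \sum_(l < 3 | P l) F l =
  (if P o0 then F o0 else 0) + (if P o1 then F o1 else 0)
  + (if P o2 then F o2 else 0).
Proof. by rewrite big_mkcond sum_ord3. Qed.

Lemma ord3_ind (P : 'I_3 -> Prop) : P o0 -> P o1 -> P o2 -> forall i, P i.
Proof.
move=> P0 P1 P2 [[|[|[|//]]] lt_i3].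
- by rewrite (_ : Ordinal _ = o0) //; apply/val_inj.
- by rewrite (_ : Ordinal _ = o1) //; apply/val_inj.
- by rewrite (_ : Ordinal _ = o2) //; apply/val_inj.
Qed.

Lemma eq0_of_eq (V : zmodType) (x y z : V) : x = y -> z = x - y -> z = 0.
Proof. by move=> -> ->; rewrite subrr. Qed.

Definition q0 : 'I_4 := @Ordinal 4 0 isT.
Definition q1 : 'I_4 := @Ordinal 4 1 isT.
Definition q2 : 'I_4 := @Ordinal 4 2 isT.
Definition q3 : 'I_4 := @Ordinal 4 3 isT.

Section Associator.
Variables (k : fieldType) (phi : der k 3).

Definition pentagon : Prop :=
  forall (f : series k 4) w,
    expDer (cof_12_3_4 phi) (expDer (cof_1_2_34 phi) f) w =
    expDer (cof_1_2_3 phi) (expDer (cof_1_23_4 phi) (expDer (cof_2_3_4 phi) f)) w.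

Definition inversion : Prop :=
  forall (f : series k 3) w, expDer phi (expDer (relabel3 3 2 1 phi) f) w = f w.

Definition hexagon : Prop :=
  forall (f : series k 3) w,
    expDer (dscale (1/2) (dadd (t13 k) (t23 k))) f w =
    expDer (relabel3 2 1 3 phi)
      (expDer (dscale (1/2) (t13 k))
        (expDer (dopp (relabel3 2 3 1 phi))
          (expDer (dscale (1/2) (t23 k))
            (expDer (relabel3 3 2 1 phi) f)))) w.

Lemma pentagon_linear a b : pentagon -> a != b ->
  cof_12_3_4 phi a [:: b] + cof_1_2_34 phi a [:: b] =
  cof_1_2_3 phi a [:: b] + cof_1_23_4 phi a [:: b] + cof_2_3_4 phi a [:: b].
Proof.
move=> pent /negbTE neq_ab; have := pent (sX k a) [:: a; b].
rewrite !(expDer_word2, expDer_word1) !sX_word1 !sX_word2 eqxx eq_sym neq_ab.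
rewrite !mul1r !mul0r !subr0 !add0r => E.
by rewrite addrC E; ring.
Qed.

Lemma pentagon_linear_eq0 : pentagon -> (forall i, phi i [:: i] = 0) ->
  forall i j, phi i [:: j] = 0.
Proof.
move=> pent phi_diag.
have lin a b := @pentagon_linear a b pent.
(* On each of these six words all cofaces but one or two vanish, so the
   relation says that a coefficient of phi_1 equals its own double. *)
move: (lin q0 q3 isT) (lin q3 q0 isT) (lin q0 q1 isT) (lin q1 q0 isT)
      (lin q2 q3 isT) (lin q3 q2 isT).
rewrite /cof_12_3_4 /cof_1_2_34 /cof_1_2_3 /cof_1_23_4 /cof_2_3_4 /coface.
rewrite !sum_ord3_cond /= !lsubst_word1 !sum_ord3 /=.
rewrite !phi_diag !mulr0 !mulr1 !addr0 !add0r.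
have double_eq0 (x : k) : x + x = x -> x = 0.
  by move=> E; apply: (@addrI _ x); rewrite addr0.
move=> /double_eq0 P02 /double_eq0 P20 /esym/double_eq0 P01 /esym/double_eq0 P10.
move=> /esym/double_eq0 P12 /esym/double_eq0 P21.
by apply: ord3_ind; apply: ord3_ind.
Qed.

Hypothesis phi_linear_eq0 : forall i j, phi i [:: j] = 0.

Lemma inversion_quadratic :
  inversion -> phi o2 [:: o1; o0] + phi o0 [:: o1; o2] = 0.
Proof.
move=> inv; have := inv (sX k o0) [:: o0; o1; o2].
rewrite !(expDer_word3, expDer_word2, expDer_word1,
          applyDer_word3, applyDer_word2, applyDer_word1).
rewrite !sX_word1 !sX_word2 !sX_word3 /relabel3 !sum_ord3_cond /=.
rewrite !lsubst_word1 !lsubst_word2 !sum_ord3 /= !phi_linear_eq0 => E.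
by apply: (eq0_of_eq E); ring.
Qed.

Lemma hexagon_quadratic : 2%:R != 0 :> k -> hexagon ->
  phi o2 [:: o0; o1] - phi o2 [:: o1; o0] + phi o1 [:: o2; o0] = 1 / 8.
Proof.
move=> two_neq0 hex; have := hex (sX k o0) [:: o0; o2; o1].
rewrite !(expDer_word3, expDer_word2, expDer_word1,
          applyDer_word3, applyDer_word2, applyDer_word1).
rewrite !sX_word1 !sX_word2 !sX_word3.
rewrite /relabel3 /dscale /dadd /dopp /sscale /sadd /sopp /t13 /t23 /tt /sXn /s0.
rewrite !sum_ord3_cond /= !lsubst_word1 !lsubst_word2 !sum_ord3 /=.
rewrite !phi_linear_eq0 => E.
apply/eqP; rewrite -subr_eq0; apply/eqP; apply: (eq0_of_eq (esym E)).
have eight_neq0 : 8%:R != 0 :> k.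
  by rewrite (natrM k 2 4) (natrM k 2 2) !mulf_neq0.
by field; rewrite two_neq0 eight_neq0.
Qed.

End Associator.

Theorem proposition9p2 (k : fieldType) (phi : der k 3) :
  [pchar k] =i pred0 ->
  is_kv phi ->
  (* pentagon *)
  (forall (f : series k 4) w,
     expDer (cof_12_3_4 phi) (expDer (cof_1_2_34 phi) f) w =
     expDer (cof_1_2_3 phi) (expDer (cof_1_23_4 phi) (expDer (cof_2_3_4 phi) f)) w) ->
  (* inversion *)
  (forall (f : series k 3) w, expDer phi (expDer (relabel3 3 2 1 phi) f) w = f w) ->
  (* hexagon 1 *)
  (forall (f : series k 3) w,
     expDer (dscale (1/2) (dadd (t13 k) (t23 k))) f w =
     expDer (relabel3 2 1 3 phi)
       (expDer (dscale (1/2) (t13 k))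
         (expDer (dopp (relabel3 2 3 1 phi))
           (expDer (dscale (1/2) (t23 k))
             (expDer (relabel3 3 2 1 phi) f)))) w) ->
  (* hexagon 2 *)
  (forall (f : series k 3) w,
     expDer (dscale (1/2) (dadd (t12 k) (t13 k))) f w =
     expDer (dopp (relabel3 1 3 2 phi))
       (expDer (dscale (1/2) (t13 k))
         (expDer (relabel3 3 1 2 phi)
           (expDer (dscale (1/2) (t12 k))
             (expDer (dopp (relabel3 3 2 1 phi)) f)))) w) ->
  pi2 phi = 1 / 8.
Proof.
move=> char0 [[tder _] _] pent inv hex _.
have phi_diag i : phi i [:: i] = 0 by have [_] := tder i.
have lin := pentagon_linear_eq0 pent phi_diag.
have two_neq0 : 2%:R != 0 :> k by move/pcharf0P: char0 => ->.
have inv2 := inversion_quadratic lin inv.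
have hex2 := hexagon_quadratic lin two_neq0 hex.
by rewrite /pi2 -hex2 -[LHS]subr0 -inv2; ring.
Qed.
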